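(* Let $M$ be a principally Goldie*-lifting right $R$-module. (a) If $M$ is distributive (or a duo module), then $M/N$ is principally Goldie*-lifting for every submodule $N$ of $M$. (b) If $N$ is a projection invariant submodule of $M$, i.e. $eN\subseteq N$ for every idempotent $e=e^2\in\mathrm{End}(M)$, then $M/N$ is principally Goldie*-lifting; in particular $M/A$ is principally Goldie*-lifting for every fully invariant submodule $A$ of $M$.
   Context: $R$ is an associative ring with identity; modules are unital right $R$-modules. $M$ is distributive if for all submodules $A,B,C$, $A+(B\cap C)=(A+B)\cap(A+C)$. A submodule is fully invariant if it is mapped into itself by every endomorphism of $M$; $M$ is a duo module if every submodule is fully invariant. $K\ll L$ means $K$ is small in $L$. For submodules $X,Y$ of a module $L$, $X\,\beta^*\,Y$ means $(X+Y)/X\ll L/X$ and $(X+Y)/Y\ll L/Y$. A module $L$ is principally Goldie*-lifting if for every cyclic submodule $X$ of $L$ there is a direct summand $D$ of $L$ with $X\,\beta^*\,D$. *)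

From HB Require Import structures.
From mathcomp Require Import all_boot all_order all_algebra.
Set Implicit Arguments. Unset Strict Implicit. Unset Printing Implicit Defensive.
Import GRing.Theory.
Local Open Scope ring_scope.

(* Right R-modules are modelled as left modules over the converse ring
   R^c = GRing.converse R (so that  x r  is written  (r : R^c) *: x ). *)
Notation rmodType R := (lmodType (GRing.converse R)).

Section ModuleTheory.
Variable (S : nzRingType) (M : lmodType S).

Definition submod (A : M -> Prop) : Prop :=
  A 0 /\ forall (a : S) (u v : M), A u -> A v -> A (a *: u + v).

Definition msub (A B : M -> Prop) : Prop := forall x, A x -> B x.
Definition meq (A B : M -> Prop) : Prop := forall x, A x <-> B x.
Definition madd (A B : M -> Prop) : M -> Prop :=
  fun x => exists a b, A a /\ B b /\ x = a + b.
Definition mcap (A B : M -> Prop) : M -> Prop := fun x => A x /\ B x.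
Definition mfull : M -> Prop := fun _ => True.
Definition mzero : M -> Prop := fun x => x = 0.

Definition cyclic_sub (x : M) : M -> Prop := fun y => exists r : S, y = r *: x.

Definition small (K : M -> Prop) : Prop :=
  submod K /\ forall X, submod X -> meq (madd K X) mfull -> meq X mfull.

(* For submodules X <= K of M:  K/X is small in M/X.  Submodules of M/X are
   identified with submodules W of M containing X (correspondence theorem). *)
Definition small_mod (X K : M -> Prop) : Prop :=
  forall W, submod W -> msub X W -> meq (madd K W) mfull -> meq W mfull.

(* X beta* Y :  (X+Y)/X << M/X  and  (X+Y)/Y << M/Y *)
Definition beta_star (X Y : M -> Prop) : Prop :=
  small_mod X (madd X Y) /\ small_mod Y (madd X Y).

Definition direct_summand (D : M -> Prop) : Prop :=
  submod D /\ exists D', submod D' /\ meq (madd D D') mfull /\ meq (mcap D D') mzero.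

Definition principally_goldie_star_lifting : Prop :=
  forall x : M, exists D, direct_summand D /\ beta_star (cyclic_sub x) D.

Definition distributive : Prop :=
  forall A B C, submod A -> submod B -> submod C ->
    meq (madd A (mcap B C)) (mcap (madd A B) (madd A C)).

Definition fully_invariant (A : M -> Prop) : Prop :=
  submod A /\ forall (f : {linear M -> M}) x, A x -> A (f x).

Definition duo : Prop := forall A, submod A -> fully_invariant A.

Definition projection_invariant (A : M -> Prop) : Prop :=
  submod A /\ forall (e : {linear M -> M}), (forall x, e (e x) = e x) ->
    forall x, A x -> A (e x).

(* Q is (isomorphic to) the quotient M/N : there is a surjective
   homomorphism M -> Q with kernel N. *)
Definition is_quotient_by (N : M -> Prop) (Q : lmodType S) (f : {linear M -> Q}) : Prop :=
  (forall q : Q, exists m, f m = q) /\ (forall m, N m <-> f m = 0).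

End ModuleTheory.

(* Let f : M -> Q be onto with kernel N, and suppose N is compatible with every
   decomposition M = D (+) D', i.e. N = (N /\ D) (+) (N /\ D').  Then f maps
   each decomposition of M to one of Q, and the beta* relation between xR and a
   summand D of M passes to f(x)R and f(D), because the preimage of a submodule
   of Q witnessing smallness is a submodule of M witnessing smallness.  The
   compatibility of N holds when N is projection invariant (apply the
   projection onto D along D'), when N is fully invariant (in particular when M
   is duo), and, for any N, when M is distributive. *)

From HB Require Import structures.
From mathcomp Require Import all_boot all_order all_algebra.
From Stdlib Require Import ClassicalEpsilon.
Set Implicit Arguments. Unset Strict Implicit.
Import GRing.Theory.
Local Open Scope ring_scope.

Section Decompositions.
Variables (S : nzRingType) (M : lmodType S).

Lemma submod0 (A : M -> Prop) : submod A -> A 0.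
Proof. by case. Qed.

Lemma submodN (A : M -> Prop) u : submod A -> A u -> A (- u).
Proof.
move=> [A0 AP] Au; have := AP (-1) u 0 Au A0.
by rewrite scaleN1r addr0.
Qed.

Lemma submodB (A : M -> Prop) u v : submod A -> A u -> A v -> A (u - v).
Proof.
move=> sA Au Av; have := proj2 sA 1 u (- v) Au (submodN sA Av).
by rewrite scale1r.
Qed.

Definition complements (D D' : M -> Prop) : Prop :=
  meq (madd D D') (@mfull S M) /\ meq (mcap D D') (@mzero S M).

Definition splits_along_decompositions (N : M -> Prop) : Prop :=
  forall D D', submod D -> submod D' -> complements D D' ->
  forall d d', D d -> D' d' -> N (d + d') -> N d.

Section Projection.
Variables (D D' : M -> Prop).
Hypotheses (sD : submod D) (sD' : submod D') (cDD' : complements D D').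

Lemma exists_summand_component m : exists d, D d /\ D' (m - d).
Proof.
have [d [d' [Dd [Dd' ->]]]] := proj2 (cDD'.1 m) I.
by exists d; rewrite addrAC subrr add0r.
Qed.

Definition summand_proj (m : M) : M :=
  proj1_sig (constructive_indefinite_description _ (exists_summand_component m)).

Lemma summand_projP m : D (summand_proj m) /\ D' (m - summand_proj m).
Proof. by rewrite /summand_proj; case: constructive_indefinite_description. Qed.

Lemma summand_proj_unique m d : D d -> D' (m - d) -> summand_proj m = d.
Proof.
move=> Dd D'md; have [Dp D'mp] := summand_projP m.
have Hcap : mcap D D' (summand_proj m - d).
  split; first exact: submodB.
  by have := submodB sD' D'md D'mp; rewrite opprB addrC addrA subrK.
by apply/eqP; rewrite -subr_eq0; apply/eqP; exact: (proj1 (cDD'.2 _) Hcap).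
Qed.

Lemma summand_proj_is_linear : linear summand_proj.
Proof.
move=> a u v; apply: summand_proj_unique.
  by apply: (proj2 sD); [exact: (summand_projP u).1 | exact: (summand_projP v).1].
have -> : a *: u + v - (a *: summand_proj u + summand_proj v)
        = a *: (u - summand_proj u) + (v - summand_proj v).
  by rewrite opprD addrACA scalerBr.
by apply: (proj2 sD'); [exact: (summand_projP u).2 | exact: (summand_projP v).2].
Qed.

Definition summand_proj_linear : {linear M -> M} :=
  HB.pack summand_proj (GRing.isLinear.Build S M M *:%R _ summand_proj_is_linear).

Lemma summand_proj_idem m : summand_proj (summand_proj m) = summand_proj m.
Proof.
apply: summand_proj_unique; first exact: (summand_projP m).1.
by rewrite subrr; exact: submod0.
Qed.

Lemma summand_proj_add d d' : D d -> D' d' -> summand_proj (d + d') = d.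
Proof. by move=> Dd Dd'; apply: summand_proj_unique; rewrite // addrC addKr. Qed.

End Projection.

Lemma projection_invariant_splits (N : M -> Prop) :
  projection_invariant N -> splits_along_decompositions N.
Proof.
move=> [_ Ninv] D D' sD sD' cDD' d d' Dd Dd' Ndd'.
have := Ninv (summand_proj_linear sD sD' cDD')
  (summand_proj_idem sD sD' cDD') _ Ndd'.
by rewrite /= summand_proj_add.
Qed.

Lemma fully_invariant_projection_invariant (N : M -> Prop) :
  fully_invariant N -> projection_invariant N.
Proof. by move=> [sN Ninv]; split=> // e _; exact: Ninv. Qed.

(* d lies in (N + D) /\ (N + D') = N + (D /\ D') = N. *)
Lemma distributive_splits (N : M -> Prop) :
  distributive M -> submod N -> splits_along_decompositions N.
Proof.
move=> distrM sN D D' sD sD' cDD' d d' Dd Dd' Ndd'.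
have dND : madd N D d by exists 0, d; rewrite add0r; split=> //; exact: submod0.
have dND' : madd N D' d.
  by exists (d + d'), (- d'); rewrite addrK; split=> //; split=> //; exact: submodN.
have [n [c [Nn [DD'c ->]]]] := proj2 (distrM N D D' sN sD sD' d) (conj dND dND').
by rewrite (proj1 (cDD'.2 c) DD'c) addr0.
Qed.

End Decompositions.

Section Images.
Variables (S : nzRingType) (M Q : lmodType S) (f : {linear M -> Q}).
Hypothesis f_onto : forall q, exists m, f m = q.

Definition img (A : M -> Prop) : Q -> Prop := fun q => exists a, A a /\ q = f a.

Lemma img_submod A : submod A -> submod (img A).
Proof.
move=> [A0 AP]; split; first by exists 0; rewrite linear0.
move=> r _ _ [u [Au ->]] [v [Av ->]].
by exists (r *: u + v); rewrite linearP; split=> //; exact: AP.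
Qed.

Lemma preimg_submod (W : Q -> Prop) : submod W -> submod (fun m => W (f m)).
Proof.
move=> [W0 WP]; split; first by rewrite linear0.
by move=> r u v Wu Wv; rewrite linearP; exact: WP.
Qed.

Lemma img_madd A B : msub (madd (img A) (img B)) (img (madd A B)).
Proof.
move=> _ [_ [_ [[a [Aa ->]] [[b [Bb ->]] ->]]]].
by exists (a + b); rewrite linearD; split=> //; exists a, b.
Qed.

Lemma img_cyclic x : meq (img (cyclic_sub x)) (cyclic_sub (f x)).
Proof.
move=> q; split.
  by move=> [_ [[r ->] ->]]; exists r; rewrite linearZZ.
by move=> [r ->]; exists (r *: x); rewrite linearZZ; split=> //; exists r.
Qed.

Lemma small_modS (Z Z' K K' : Q -> Prop) :
  msub Z Z' -> msub K' K -> small_mod Z K -> small_mod Z' K'.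
Proof.
move=> ZZ' K'K smallZK W sW Z'W K'Wfull; apply: smallZK => //.
  by move=> q /ZZ'; exact: Z'W.
move=> q; split=> // _; have [k [w [K'k [Ww ->]]]] := proj2 (K'Wfull q) I.
by exists k, w; split=> //; exact: K'K.
Qed.

(* The preimage of a submodule W of Q witnesses smallness in M. *)
Lemma small_mod_img (Z K : M -> Prop) :
  small_mod Z K -> small_mod (img Z) (img K).
Proof.
move=> smallZK W sW ZW KWfull q; split=> // _.
have preW_full : meq (fun m => W (f m)) (@mfull S M).
  apply: smallZK; first exact: preimg_submod.
    by move=> z Zz; apply: ZW; exists z.
  move=> m; split=> // _.
  have [_ [w [[k [Kk ->]] [Ww fm]]]] := proj2 (KWfull (f m)) I.
  exists k, (m - k); split=> //; split; last by rewrite addrC subrK.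
  by rewrite linearB fm addrAC subrr add0r.
by have [m <-] := f_onto q; exact: (proj2 (preW_full m) I).
Qed.

Lemma beta_star_img (X Y : M -> Prop) :
  beta_star X Y -> beta_star (img X) (img Y).
Proof.
move=> [smallX smallY]; split.
  exact: small_modS (@img_madd X Y) (small_mod_img smallX).
exact: small_modS (@img_madd X Y) (small_mod_img smallY).
Qed.

Lemma beta_star_meql (X X' Y : Q -> Prop) :
  meq X X' -> beta_star X Y -> beta_star X' Y.
Proof.
move=> XX' [smallX smallY].
have sub_madd : msub (madd X' Y) (madd X Y).
  by move=> q [a [b [X'a [Yb ->]]]]; exists a, b; split=> //; exact/XX'.
split; last exact: small_modS sub_madd smallY.
by apply: small_modS sub_madd smallX => q /XX'.
Qed.

Variable N : M -> Prop.
Hypotheses (f_ker : forall m, N m <-> f m = 0)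
  (splitN : splits_along_decompositions N).

Lemma complements_img D D' : submod D -> submod D' ->
  complements D D' -> complements (img D) (img D').
Proof.
move=> sD sD' cDD'; split=> q; split=> //.
- move=> _; have [m <-] := f_onto q.
  have [d [d' [Dd [Dd' ->]]]] := proj2 (cDD'.1 m) I.
  by exists (f d), (f d'); rewrite linearD; split; [exists d | split=> //; exists d'].
- move=> [[d [Dd ->]] [d' [Dd' fdd']]].
  have Nd : N d.
    apply: (splitN sD sD' cDD' Dd (submodN sD' Dd')).
    by apply/f_ker; rewrite linearB fdd' subrr.
  exact/f_ker.
- by move=> ->; split; exists 0; rewrite linear0; split=> //; exact: submod0.
Qed.

Lemma direct_summand_img D : direct_summand D -> direct_summand (img D).
Proof.
move=> [sD [D' [sD' cDD']]]; split; first exact: img_submod.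
by exists (img D'); split; [exact: img_submod | exact: complements_img].
Qed.

Lemma quotient_principally_goldie_star_lifting :
  principally_goldie_star_lifting M -> principally_goldie_star_lifting Q.
Proof.
move=> pglM q; have [x <-] := f_onto q.
have [D [sumD betaxD]] := pglM x.
exists (img D); split; first exact: direct_summand_img.
exact: beta_star_meql (img_cyclic x) (beta_star_img betaxD).
Qed.

End Images.

Theorem corollary3p11 (R : nzRingType) (M : rmodType R) :
  principally_goldie_star_lifting M ->
  (* (a) *)
  ((distributive M \/ duo M) ->
     forall (N : M -> Prop), submod N ->
     forall (Q : rmodType R) (f : {linear M -> Q}),
       is_quotient_by N f -> principally_goldie_star_lifting Q) /\
  (* (b) *)
  (forall (N : M -> Prop), projection_invariant N ->
     forall (Q : rmodType R) (f : {linear M -> Q}),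
       is_quotient_by N f -> principally_goldie_star_lifting Q) /\
  (* (b), in particular *)
  (forall (A : M -> Prop), fully_invariant A ->
     forall (Q : rmodType R) (f : {linear M -> Q}),
       is_quotient_by A f -> principally_goldie_star_lifting Q).
Proof.
move=> pglM.
have splits_quotient N : splits_along_decompositions N ->
    forall (Q : rmodType R) (f : {linear M -> Q}),
    is_quotient_by N f -> principally_goldie_star_lifting Q.
  by move=> splitN Q f [f_onto f_ker];
    exact: quotient_principally_goldie_star_lifting f_ker splitN pglM.
have fi_splits A : fully_invariant A -> splits_along_decompositions A.
  by move/fully_invariant_projection_invariant/projection_invariant_splits.
split; [|split].
- move=> [distrM | duoM] N sN; apply: splits_quotient.
    exact: distributive_splits.
  exact: fi_splits (duoM N sN).
- by move=> N /projection_invariant_splits; exact: splits_quotient.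
- by move=> A /fi_splits; exact: splits_quotient.
Qed.
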